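(* Let $c_1>0$, $c_3>0$, $r_2>0$, $r_4>0$, $\tau>0$, and put \[ a_1=2\pi c_3\frac{2c_1}{c_1+c_3},\qquad a_2=2\pi c_3\frac{c_1-c_3}{c_1+c_3}. \] Define \[ A=\begin{pmatrix}-a_1r_2&0\\0&-(a_1-a_2)r_4\end{pmatrix},\quad B=\begin{pmatrix}0&-a_1r_4\\-a_1r_2&0\end{pmatrix},\quad C=\begin{pmatrix}0&0\\0&-a_2r_4\end{pmatrix}, \] and $\Delta(s)=sI-A-Be^{-\tau s}-Ce^{-2\tau s}$ for $s\in\mathbb{C}$, with $I$ the $2\times2$ identity. Let $\sigma=\{\lambda\in\mathbb{C}:\det\Delta(\lambda)=0\}$. Then (a) $0\in\sigma$ and $\lambda=0$ is a simple root of $\det\Delta(\lambda)=0$; (b) every $\lambda\in\sigma\setminus\{0\}$ satisfies $\Re(\lambda)<0$.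
   Context: In the physical model $c_i=\cos\theta_i/n_i$ with refractive indices $n_i>0$ and angles $\theta_i\in[0,\pi/2)$ related by Snell's law $n_1\sin\theta_1=n_3\sin\theta_3$; $\Delta(s)$ is the characteristic matrix of the delay differential system $\dot x(t)=Ax(t)+Bx(t-\tau)+Cx(t-2\tau)+h(t)$ in $\mathbb{R}^2$. Note $a_1-a_2=2\pi c_3$. *)

From Stdlib Require Import Reals.
From Coquelicot Require Import Coquelicot.
Open Scope R_scope.

Definition Cexp (z : C) : C :=
  (exp (Re z) * cos (Im z), exp (Re z) * sin (Im z)).

(* real 2x2 matrices, entries indexed by 0,1 *)
Definition mat2 := nat -> nat -> R.

Definition a1 (c1 c3 : R) : R := 2 * PI * c3 * (2 * c1 / (c1 + c3)).
Definition a2 (c1 c3 : R) : R := 2 * PI * c3 * ((c1 - c3) / (c1 + c3)).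

Definition matA (c1 c3 r2 r4 : R) : mat2 := fun i j =>
  match i, j with
  | 0, 0 => - a1 c1 c3 * r2
  | 1, 1 => - (a1 c1 c3 - a2 c1 c3) * r4
  | _, _ => 0 end.
Definition matB (c1 c3 r2 r4 : R) : mat2 := fun i j =>
  match i, j with
  | 0, 1 => - a1 c1 c3 * r4
  | 1, 0 => - a1 c1 c3 * r2
  | _, _ => 0 end.
Definition matC (c1 c3 r2 r4 : R) : mat2 := fun i j =>
  match i, j with
  | 1, 1 => - a2 c1 c3 * r4
  | _, _ => 0 end.

Definition Delta (c1 c3 r2 r4 tau : R) (s : C) (i j : nat) : C :=
  ((if Nat.eqb i j then s else 0%C)
   - RtoC (matA c1 c3 r2 r4 i j)
   - RtoC (matB c1 c3 r2 r4 i j) * Cexp (- (RtoC tau * s))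
   - RtoC (matC c1 c3 r2 r4 i j) * Cexp (- (RtoC (2 * tau) * s)))%C.

Definition det2 (M : nat -> nat -> C) : C :=
  (M 0%nat 0%nat * M 1%nat 1%nat - M 0%nat 1%nat * M 1%nat 0%nat)%C.

Definition charfun (c1 c3 r2 r4 tau : R) (s : C) : C :=
  det2 (Delta c1 c3 r2 r4 tau s).

Definition simple_root (f : C -> C) (z : C) : Prop :=
  f z = 0%C /\ exists d : C, @is_derive C_AbsRing C_NormedModule f z d /\ d <> 0%C.

From Pilot Require Import Defs.
From Stdlib Require Import Reals Psatz.
From Coquelicot Require Import Coquelicot.
Open Scope R_scope.

(* The two delayed off-diagonal entries multiply to a term in e^{-2 tau s}, so
   det Delta(s) = (s + p)(s + q k) - q (p k - a s) e^{-2 tau s}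
   with p = a1 r2, q = r4, k = a1 - a2 = 2 pi c3 and a = a2, where |a| < k.
   At s = 0 this vanishes with derivative p + q (k + a) + 2 tau p q k > 0.
   If Re s >= 0 and s <> 0, then |e^{-2 tau s}| <= 1, |p k - a s| <= k |s + p|
   and |s + q k| > q k, so the delay term is strictly smaller in modulus than
   (s + p)(s + q k) and s cannot be a root. *)

Lemma add_pos_of_Rabs_lt (a k : R) : Rabs a < k -> 0 < k + a.
Proof. intros H; pose proof (Rle_abs (- a)); rewrite Rabs_Ropp in *; lra. Qed.

Lemma exp_le_1 (x : R) : x <= 0 -> exp x <= 1.
Proof.
  intros [Hlt | ->]; rewrite <- exp_0; [left; apply exp_increasing, Hlt | right; reflexivity].
Qed.

Lemma exp_sub_lin_bound (a : R) : Rabs a <= 1/2 -> 0 <= exp a - 1 - a <= 2 * a ^ 2.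
Proof.
  intros Ha; apply Rabs_le_between in Ha.
  pose proof (exp_ineq1_le a); pose proof (exp_ineq1_le (- a)).
  (* [exp (-a) >= 1 - a] gives [exp a <= 1 / (1 - a)] *)
  assert (exp a * exp (- a) = 1) by (rewrite <- exp_plus, Rplus_opp_r; apply exp_0).
  pose proof (exp_pos a).
  nra.
Qed.

Lemma cos_sub1_bound (b : R) : Rabs b <= 1 -> Rabs (cos b - 1) <= b ^ 2 / 2.
Proof.
  intros Hb; apply Rabs_le_between in Hb. pose proof PI2_1.
  destruct (cos_bound b 0) as [L _]; try lra.
  assert (E : cos_approx b (2 * 0 + 1) = 1 - b ^ 2 / 2)
    by (unfold cos_approx, cos_term; simpl; field).
  rewrite E in L. pose proof (COS_bound b).
  apply Rabs_le; lra.
Qed.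

Lemma sin_sub_id_bound_nonneg (b : R) : 0 <= b <= 1 -> 0 <= b - sin b <= b ^ 3 / 6.
Proof.
  intros Hb. pose proof PI2_1.
  destruct (sin_bound b 0) as [L U]; try lra.
  assert (EL : sin_approx b (2 * 0 + 1) = b - b ^ 3 / 6)
    by (unfold sin_approx, sin_term; simpl; field).
  assert (EU : sin_approx b (2 * (0 + 1)) = b - b ^ 3 / 6 + b ^ 5 / 120)
    by (unfold sin_approx, sin_term; simpl; field).
  rewrite EL in L; rewrite EU in U.
  assert (b ^ 5 <= b ^ 3).
  { replace (b ^ 5) with (b ^ 3 * (b * b)) by ring.
    rewrite <- (Rmult_1_r (b ^ 3)) at 2.
    apply Rmult_le_compat_l; [apply pow_le | ]; nra. }
  lra.
Qed.

Lemma sin_sub_id_bound (b : R) : Rabs b <= 1 -> Rabs (sin b - b) <= Rabs b ^ 3 / 6.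
Proof.
  intros Hb. destruct (Rle_or_lt 0 b) as [Hpos | Hneg].
  - rewrite (Rabs_pos_eq b) in * by lra.
    pose proof (sin_sub_id_bound_nonneg b ltac:(lra)).
    rewrite Rabs_minus_sym, Rabs_pos_eq; lra.
  - rewrite (Rabs_left b) in * by lra.
    pose proof (sin_sub_id_bound_nonneg (- b) ltac:(lra)) as B. rewrite sin_neg in B.
    rewrite Rabs_pos_eq; lra.
Qed.

Lemma Cexp_0 : Cexp 0 = 1%C.
Proof. unfold Cexp, RtoC; simpl; rewrite exp_0, cos_0, sin_0; f_equal; ring. Qed.

Lemma Cexp_add (z w : C) : Cexp (z + w) = (Cexp z * Cexp w)%C.
Proof.
  destruct z as [x y], w as [u v]; unfold Cexp, Cmult; simpl.
  rewrite exp_plus, cos_plus, sin_plus; f_equal; ring.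
Qed.

Lemma Cmod_Cexp (z : C) : Cmod (Cexp z) = exp (Re z).
Proof.
  destruct z as [x y]; unfold Cmod, Cexp, Re, Im; cbn [fst snd].
  replace ((exp x * cos y) ^ 2 + (exp x * sin y) ^ 2)
    with (exp x ^ 2 * (Rsqr (sin y) + Rsqr (cos y))) by (unfold Rsqr; ring).
  rewrite sin2_cos2, Rmult_1_r.
  apply sqrt_pow2, Rlt_le, exp_pos.
Qed.

Lemma Cmod_le_Rabs_add (u v : R) : Cmod (u, v) <= Rabs u + Rabs v.
Proof.
  pose proof (Cmod2_alt (u, v)) as E; cbn [Re Im fst snd] in E.
  rewrite <- (pow2_abs u), <- (pow2_abs v) in E.
  pose proof (Cmod_ge_0 (u, v)); pose proof (Rabs_pos u); pose proof (Rabs_pos v).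
  nra.
Qed.

Lemma exp_cos_remainder_bound (a b r : R) :
  Rabs a <= r -> Rabs b <= r -> r <= 1/2 -> Rabs (exp a * cos b - 1 - a) <= 3 * r ^ 2.
Proof.
  intros Ha Hb Hr.
  assert (Ha2 : a ^ 2 <= r ^ 2)
    by (rewrite <- pow2_abs; apply pow_incr; split; [apply Rabs_pos | exact Ha]).
  assert (Hb2 : b ^ 2 <= r ^ 2)
    by (rewrite <- pow2_abs; apply pow_incr; split; [apply Rabs_pos | exact Hb]).
  pose proof (Rabs_pos a); apply Rabs_le_between in Ha.
  destruct (exp_sub_lin_bound a ltac:(apply Rabs_le; lra)) as [E0 E1].
  pose proof (cos_sub1_bound b ltac:(lra)) as Hc.
  assert (Hcos : Rabs (cos b) <= 1) by (apply Rabs_le, COS_bound).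
  assert (Rabs (1 + a) <= 3/2) by (apply Rabs_le; lra).
  replace (exp a * cos b - 1 - a) with ((exp a - 1 - a) * cos b + (1 + a) * (cos b - 1))
    by ring.
  eapply Rle_trans; [apply Rabs_triang | rewrite !Rabs_mult].
  rewrite (Rabs_pos_eq (exp a - 1 - a)) by lra.
  pose proof (Rabs_pos (cos b)); pose proof (Rabs_pos (1 + a));
    pose proof (Rabs_pos (cos b - 1)).
  nra.
Qed.

Lemma exp_sin_remainder_bound (a b r : R) :
  Rabs a <= r -> Rabs b <= r -> r <= 1/2 -> Rabs (exp a * sin b - b) <= 5 * r ^ 2.
Proof.
  intros Ha Hb Hr.
  pose proof (Rabs_pos a); pose proof (Rabs_pos b).
  destruct (exp_sub_lin_bound a ltac:(lra)) as [E0 E1].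
  pose proof (sin_sub_id_bound b ltac:(lra)) as Hs.
  assert (He : Rabs (exp a - 1) <= 2 * r)
    by (apply Rabs_le; apply Rabs_le_between in Ha; nra).
  assert (Hb3 : Rabs b ^ 3 <= r ^ 2).
  { replace (Rabs b ^ 3) with (Rabs b * Rabs b ^ 2) by ring.
    assert (Rabs b ^ 2 <= r ^ 2) by (apply pow_incr; lra).
    nra. }
  assert (Hsin : Rabs (sin b) <= 2 * r).
  { replace (sin b) with ((sin b - b) + b) by ring.
    eapply Rle_trans; [apply Rabs_triang |].
    assert (r ^ 2 <= r) by nra.
    lra. }
  replace (exp a * sin b - b) with ((exp a - 1) * sin b + (sin b - b)) by ring.
  eapply Rle_trans; [apply Rabs_triang | rewrite Rabs_mult].
  pose proof (Rabs_pos (exp a - 1)); pose proof (Rabs_pos (sin b)).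
  nra.
Qed.

Lemma Cexp_sub_lin_bound (h : C) :
  Cmod h <= 1/2 -> Cmod (Cexp h - 1 - h)%C <= 8 * Cmod h ^ 2.
Proof.
  destruct h as [a b]; intros Hr.
  pose proof (Rmax_Cmod (a, b)) as M; cbn [fst snd] in M.
  assert (Ha : Rabs a <= Cmod (a, b)) by (eapply Rle_trans; [apply Rmax_l | exact M]).
  assert (Hb : Rabs b <= Cmod (a, b)) by (eapply Rle_trans; [apply Rmax_r | exact M]).
  replace (Cexp (a, b) - 1 - (a, b))%C with (exp a * cos b - 1 - a, exp a * sin b - b)
    by (unfold Cexp, Cminus, Cplus, Copp, RtoC; cbn [fst snd Re Im]; f_equal; ring).
  eapply Rle_trans; [apply Cmod_le_Rabs_add |].
  pose proof (exp_cos_remainder_bound a b _ Ha Hb Hr).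
  pose proof (exp_sin_remainder_bound a b _ Ha Hb Hr).
  lra.
Qed.

(* Coquelicot's product and chain rules are stated in [AbsRing_NormedModule C_AbsRing];
   [simple_root] uses [C_NormedModule], which carries the same norm. *)
Local Notation is_C_derive := (@is_derive C_AbsRing (AbsRing_NormedModule C_AbsRing)).

Lemma is_C_derive_eq (f : C -> C) (z d d' : C) :
  is_C_derive f z d -> d = d' -> is_C_derive f z d'.
Proof. now intros H <-. Qed.

Lemma is_C_derive_plus (f g : C -> C) (z df dg : C) :
  is_C_derive f z df -> is_C_derive g z dg -> is_C_derive (fun s => f s + g s)%C z (df + dg)%C.
Proof. exact (is_derive_plus (V := AbsRing_NormedModule C_AbsRing) f g z df dg). Qed.

Lemma is_C_derive_minus (f g : C -> C) (z df dg : C) :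
  is_C_derive f z df -> is_C_derive g z dg -> is_C_derive (fun s => f s - g s)%C z (df - dg)%C.
Proof. exact (is_derive_minus (V := AbsRing_NormedModule C_AbsRing) f g z df dg). Qed.

Lemma is_C_derive_mult (f g : C -> C) (z df dg : C) :
  is_C_derive f z df -> is_C_derive g z dg ->
  is_C_derive (fun s => f s * g s)%C z (df * g z + f z * dg)%C.
Proof. intros Hf Hg; exact (is_derive_mult f g z df dg Hf Hg Cmult_comm). Qed.

Lemma is_C_derive_of_remainder (f : C -> C) (z l : C) (M d : R) : 0 < d ->
  (forall h, Cmod h <= d -> Cmod (f (z + h) - f z - h * l)%C <= M * Cmod h ^ 2) ->
  is_C_derive f z l.
Proof.
  intros Hd Hrem; split; [apply is_linear_scal_l |].
  intros z' Hz'; rewrite <- (is_filter_lim_locally_unique _ _ Hz'); clear z' Hz'.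
  intros [eps Heps].
  assert (Hdelta : 0 < Rmin d (eps / (Rabs M + 1))).
  { apply Rmin_glb_lt; [exact Hd |]. pose proof (Rabs_pos M).
    apply Rdiv_lt_0_compat; lra. }
  exists (mkposreal _ Hdelta); intros y Hy; cbn in Hy |- *.
  unfold AbsRing_ball, abs, minus, plus, opp in Hy; cbn in Hy.
  unfold norm, minus, plus, opp, scal; cbn.
  set (h := (y + - z)%C) in *.
  replace y with (z + h)%C by (unfold h; ring).
  assert (Hh : Cmod h <= d) by (pose proof (Rmin_l d (eps / (Rabs M + 1))); lra).
  specialize (Hrem h Hh); unfold Cminus in Hrem.
  assert (Cmod h * (Rabs M + 1) <= eps).
  { pose proof (Rmin_r d (eps / (Rabs M + 1))). pose proof (Rabs_pos M).
    apply Rle_div_r; [lra|]. lra. }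
  assert (M * Cmod h ^ 2 <= Rabs M * Cmod h ^ 2)
    by (apply Rmult_le_compat_r; [apply pow_le, Cmod_ge_0 | apply Rle_abs]).
  pose proof (Cmod_ge_0 h).
  nra.
Qed.

Lemma is_derive_Cexp (z : C) : is_C_derive Cexp z (Cexp z).
Proof.
  apply (is_C_derive_of_remainder _ _ _ (8 * Cmod (Cexp z)) (1/2)); [lra |].
  intros h Hh.
  replace (Cexp (z + h) - Cexp z - h * Cexp z)%C with (Cexp z * (Cexp h - 1 - h))%C
    by (rewrite Cexp_add; ring).
  rewrite Cmod_mult.
  pose proof (Cexp_sub_lin_bound h Hh); pose proof (Cmod_ge_0 (Cexp z)).
  nra.
Qed.

Lemma is_C_derive_Cexp_lin (c z : C) :
  is_C_derive (fun s => Cexp (- (c * s)))%C z (- c * Cexp (- (c * z)))%C.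
Proof.
  eapply is_C_derive_eq.
  { apply (is_derive_comp (V := AbsRing_NormedModule C_AbsRing) Cexp (fun s => - (c * s))%C);
      [apply is_derive_Cexp |].
    apply (is_derive_opp (V := AbsRing_NormedModule C_AbsRing) (fun s => c * s)%C).
    apply is_C_derive_mult; [apply is_derive_const | apply is_derive_id]. }
  change ((- (0 * z + c * 1)) * Cexp (- (c * z)) = - c * Cexp (- (c * z)))%C.
  ring.
Qed.

Lemma is_derive_C_NormedModule (f : C -> C) (z l : C) :
  is_C_derive f z l -> @is_derive C_AbsRing C_NormedModule f z l.
Proof. intros [_ Hdomin]; split; [apply is_linear_scal_l | exact Hdomin]. Qed.

Lemma simple_root_ext (f g : C -> C) (z : C) :
  (forall s, f s = g s) -> simple_root f z -> simple_root g z.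
Proof.
  intros Hfg [Hz [d [Hd Hd0]]]; split; [now rewrite <- Hfg |].
  exists d; split; [exact (is_derive_ext f g z d Hfg Hd) | exact Hd0].
Qed.

Lemma Cmod_affine_le (p k a : R) (s : C) : 0 <= p -> Rabs a <= k -> 0 <= Re s ->
  Cmod (RtoC (p * k) - RtoC a * s)%C <= k * Cmod (s + RtoC p)%C.
Proof.
  destruct s as [x y]; cbn [Re fst]; intros Hp Hak Hx.
  apply Rabs_le_between in Hak.
  apply Rsqr_incr_0_var; [| apply Rmult_le_pos; [lra | apply Cmod_ge_0]].
  rewrite !Rsqr_pow2, Rpow_mult_distr, !Cmod2_alt; cbn.
  (* the gap is [(k^2 - a^2)|s|^2 + 2 p k (k + a) Re s] *)
  assert (0 <= (k - a) * (k + a)) by nra.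
  assert (0 <= p * k * (k + a) * x) by (apply Rmult_le_pos; [apply Rmult_le_pos|]; nra).
  nra.
Qed.

Lemma Cmod_shift_gt (K : R) (s : C) : 0 < K -> 0 <= Re s -> s <> 0%C ->
  K < Cmod (s + RtoC K)%C.
Proof.
  destruct s as [x y]; cbn [Re fst]; intros HK Hx Hs.
  assert (Hxy : 0 < x \/ y <> 0).
  { destruct (Req_dec y 0) as [-> | Hy]; [left | right; exact Hy].
    destruct Hx as [Hx | <-]; [exact Hx | contradiction]. }
  apply Rsqr_incrst_0; [| lra | apply Cmod_ge_0].
  rewrite !Rsqr_pow2, Cmod2_alt; cbn.
  destruct Hxy as [Hx' | Hy]; [nra |].
  assert (0 < y ^ 2) by (apply pow2_gt_0; exact Hy).
  nra.
Qed.

Section ReducedCharacteristicFunction.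

Variables p q k a tau : R.

Definition char_reduced (s : C) : C :=
  ((s + RtoC p) * (s + RtoC (q * k))
   - RtoC q * (RtoC (p * k) - RtoC a * s) * Cexp (- (RtoC (2 * tau) * s)))%C.

Lemma char_reduced_0 : char_reduced 0 = 0%C.
Proof.
  unfold char_reduced.
  replace (- (RtoC (2 * tau) * 0))%C with (RtoC 0) by ring.
  rewrite Cexp_0.
  apply injective_projections; cbn; ring.
Qed.

Lemma is_derive_char_reduced_0 :
  is_C_derive char_reduced (RtoC 0) (RtoC (p + q * (k + a) + 2 * tau * p * q * k)).
Proof.
  eapply is_C_derive_eq.
  { apply is_C_derive_minus; apply is_C_derive_mult.
    - apply is_C_derive_plus; [apply is_derive_id | apply is_derive_const].
    - apply is_C_derive_plus; [apply is_derive_id | apply is_derive_const].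
    - apply is_C_derive_mult; [apply is_derive_const |].
      apply is_C_derive_minus; [apply is_derive_const |].
      apply is_C_derive_mult; [apply is_derive_const | apply is_derive_id].
    - apply is_C_derive_Cexp_lin. }
  cbv beta.
  replace (- (RtoC (2 * tau) * 0))%C with (RtoC 0) by ring.
  rewrite Cexp_0.
  apply injective_projections; cbn; ring.
Qed.

Hypotheses (Hp : 0 < p) (Hq : 0 < q) (Hak : Rabs a < k) (Htau : 0 <= tau).

Lemma simple_root_char_reduced_0 : simple_root char_reduced 0.
Proof.
  split; [apply char_reduced_0 |].
  eexists; split; [apply is_derive_C_NormedModule, is_derive_char_reduced_0 |].
  intros Hd; apply RtoC_inj in Hd.
  pose proof (Rabs_pos a); pose proof (add_pos_of_Rabs_lt a k Hak).
  assert (0 < q * (k + a)) by (apply Rmult_lt_0_compat; lra).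
  assert (0 <= 2 * tau * p * q * k) by (repeat apply Rmult_le_pos; lra).
  lra.
Qed.

Lemma char_reduced_root_Re_neg (s : C) : char_reduced s = 0%C -> s <> 0%C -> Re s < 0.
Proof.
  intros Hroot Hs.
  apply Rnot_le_lt; intros Hre.
  assert (Hk : 0 < k) by (pose proof (Rabs_pos a); lra).
  set (A := Cmod (s + RtoC p)%C); set (B := Cmod (s + RtoC (q * k))%C);
  set (V := Cmod (RtoC (p * k) - RtoC a * s)%C); set (E := exp (- (2 * tau * Re s))).
  assert (HAB : A * B = q * V * E).
  { unfold char_reduced in Hroot; apply Ceq_minus, (f_equal Cmod) in Hroot.
    rewrite !Cmod_mult, Cmod_Cexp, Cmod_R, Rabs_pos_eq in Hroot by lra.
    unfold A, B, V, E; rewrite Hroot; do 3 f_equal.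
    destruct s; cbn; ring. }
  assert (HE : E <= 1) by (apply exp_le_1; nra).
  assert (HV : V <= k * A) by (apply Cmod_affine_le; lra).
  assert (HB : q * k < B) by (apply Cmod_shift_gt; [nra | exact Hre | exact Hs]).
  assert (HA : 0 < A).
  { apply (Rlt_le_trans _ (Rabs (Re (s + RtoC p)%C))); [| apply re_le_Cmod].
    destruct s; cbn in *; rewrite Rabs_pos_eq; lra. }
  assert (HE0 : 0 < E) by apply exp_pos.
  assert (HV0 : 0 <= V) by apply Cmod_ge_0.
  assert (q * V * E <= q * V)
    by (rewrite <- (Rmult_1_r (q * V)) at 2; apply Rmult_le_compat_l; nra).
  assert (q * V <= q * k * A) by nra.
  assert (q * k * A < B * A) by nra.
  lra.
Qed.

End ReducedCharacteristicFunction.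

Lemma charfun_char_reduced (c1 c3 r2 r4 tau : R) (s : C) :
  charfun c1 c3 r2 r4 tau s
  = char_reduced (a1 c1 c3 * r2) r4 (a1 c1 c3 - a2 c1 c3) (a2 c1 c3) tau s.
Proof.
  unfold charfun, det2, Defs.Delta, matA, matB, matC, char_reduced; cbn [Nat.eqb].
  replace (- (RtoC (2 * tau) * s))%C with (- (RtoC tau * s) + - (RtoC tau * s))%C
    by (destruct s; apply injective_projections; cbn; ring).
  rewrite Cexp_add.
  destruct (Cexp (- (RtoC tau * s))) as [g h], s as [x y].
  apply injective_projections; cbn; ring.
Qed.

Lemma a1_sub_a2 (c1 c3 : R) : c1 + c3 <> 0 -> a1 c1 c3 - a2 c1 c3 = 2 * PI * c3.
Proof. intros H; unfold a1, a2; field; exact H. Qed.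

Lemma Rabs_a2_lt (c1 c3 : R) : 0 < c1 -> 0 < c3 -> Rabs (a2 c1 c3) < 2 * PI * c3.
Proof.
  intros H1 H3; pose proof PI_RGT_0.
  set (t := (c1 - c3) / (c1 + c3)).
  assert (Ht : t * (c1 + c3) = c1 - c3) by (unfold t; field; lra).
  assert (-1 < t < 1) by (split; nra).
  assert (0 < 2 * PI * c3) by nra.
  unfold a2; fold t; apply Rabs_def1; nra.
Qed.

Theorem lemma4 (c1 c3 r2 r4 tau : R) :
  0 < c1 -> 0 < c3 -> 0 < r2 -> 0 < r4 -> 0 < tau ->
  (charfun c1 c3 r2 r4 tau 0%C = 0%C /\ simple_root (charfun c1 c3 r2 r4 tau) 0%C) /\
  (forall l : C, charfun c1 c3 r2 r4 tau l = 0%C -> l <> 0%C -> Re l < 0).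
Proof.
  intros Hc1 Hc3 Hr2 Hr4 Htau.
  assert (Hak : Rabs (a2 c1 c3) < a1 c1 c3 - a2 c1 c3)
    by (rewrite a1_sub_a2 by lra; apply Rabs_a2_lt; assumption).
  assert (Hp : 0 < a1 c1 c3 * r2)
    by (apply Rmult_lt_0_compat; [| exact Hr2];
        replace (a1 c1 c3) with (a1 c1 c3 - a2 c1 c3 + a2 c1 c3) by ring;
        apply add_pos_of_Rabs_lt, Hak).
  pose proof (charfun_char_reduced c1 c3 r2 r4 tau) as Hred.
  assert (Hsimple : simple_root (charfun c1 c3 r2 r4 tau) 0).
  { apply (simple_root_ext _ _ _ (fun s => eq_sym (Hred s))).
    apply simple_root_char_reduced_0; lra. }
  split; [split; [exact (proj1 Hsimple) | exact Hsimple] |].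
  intros l Hl Hl0; rewrite Hred in Hl.
  exact (char_reduced_root_Re_neg _ _ _ _ _ Hp Hr4 Hak (Rlt_le _ _ Htau) l Hl Hl0).
Qed.
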